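(* Let $X$ and $Y$ be uncertain variables on a common set $\Omega$ with finite ranges. Then $$\mathcal{L}_\star(X\rightarrow Y)=\log_2\Big(|[\![X]\!]| - \min_{y\in[\![Y]\!]} |[\![X\mid Y(\omega)=y]\!]| + 1\Big).$$
   Context: Let $\Omega$ be a set. An uncertain variable (uv) is a map $X:\Omega\to\mathbb{X}$ into some set; all uvs considered have finite ranges. The range of $X$ is $[\![X]\!]:=\{X(\omega):\omega\in\Omega\}$; the conditional range is $[\![X\mid Y(\omega)=y]\!]:=\{X(\omega):\omega\in\Omega,\ Y(\omega)=y\}$. The non-stochastic brute-force guessing leakage from a uv $U$ to a uv $Y$ is $$\mathcal{L}(U\rightarrow Y):=\log_2\left(\frac{|[\![U]\!]|}{\min_{y\in[\![Y]\!]}|[\![U\mid Y(\omega)=y]\!]|}\right).$$ The maximal non-stochastic brute-force leakage from $X$ to $Y$ is $$\mathcal{L}_\star(X\rightarrow Y):=\sup_{g}\ \mathcal{L}(g\circ X\rightarrow Y),$$ where the supremum ranges over all finite sets $\mathcal{U}$ and all functions $g:[\![X]\!]\to\mathcal{U}$. *)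

From HB Require Import structures.
From mathcomp Require Import all_boot all_order all_algebra.
From mathcomp Require Import all_classical all_reals all_analysis.
From mathcomp Require Import finmap.
Set Implicit Arguments. Unset Strict Implicit. Unset Printing Implicit Defensive.
Import Order.TTheory GRing.Theory Num.Theory.
Local Open Scope classical_set_scope.
Local Open Scope ring_scope.

Definition log2 (R : realType) (x : R) : R := ln x / ln 2.

Definition ncard (T : choiceType) (A : set T) : nat := #|` fset_set A |%fset.

Definition urange (Omega : Type) (T : choiceType) (X : Omega -> T) : set T :=
  range X.

Definition ucrange (Omega : Type) (T S : choiceType)
  (X : Omega -> T) (Y : Omega -> S) (y : S) : set T :=
  [set X w | w in [set w | Y w = y]].

Definition min_crange (R : realType) (Omega : Type) (T S : choiceType)
  (X : Omega -> T) (Y : Omega -> S) : R :=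
  inf [set (ncard (ucrange X Y y))%:R | y in urange Y].

Definition bf_leakage (R : realType) (Omega : Type) (T S : choiceType)
  (U : Omega -> T) (Y : Omega -> S) : R :=
  log2 ((ncard (urange U))%:R / min_crange R U Y).

(* A function on
   [[X]] is represented by (any extension to) a function on the codomain of X;
   only its values on [[X]] matter. *)
Definition max_bf_leakage (R : realType) (Omega : Type) (T S : choiceType)
  (X : Omega -> T) (Y : Omega -> S) : R :=
  sup [set r : R | exists (U : finType) (g : T -> U),
                     r = bf_leakage R (g \o X) Y].

From HB Require Import structures.
From mathcomp Require Import all_boot all_order all_algebra.
From mathcomp Require Import all_classical all_reals all_analysis.
From mathcomp Require Import finmap.
From mathcomp Require Import lra.
Set Implicit Arguments. Unset Strict Implicit. Unset Printing Implicit Defensive.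
Import Order.TTheory GRing.Theory Num.Theory.
Local Open Scope classical_set_scope.
Local Open Scope ring_scope.

(* Write n := |[[X]]| and m := min_y |[[X | Y = y]]|, attained at some y0.

   For any g, let k := |[[g o X]]| and c := |[[g o X | Y = y1]]|
   where y1 attains the minimum for g o X.  The map g sends [[X | Y = y1]]
   onto [[g o X | Y = y1]] and the remaining at most n - m points of [[X]]
   contribute at most n - m further values, so k <= c + (n - m); since c >= 1
   this gives k / c <= n - m + 1 and L(g o X -> Y) <= log2 (n - m + 1).

   The map collapsing the whole block [[X | Y = y0]] to one
   point and keeping the other n - m points of [[X]] distinct has a range of
   size n - m + 1 and a conditional range of size 1 at y0, so it attains the
   bound; the supremum is therefore a maximum equal to log2 (n - m + 1). *)

Lemma card_imfset_extend (T U : choiceType) (f : T -> U) (A B : {fset T}) :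
  (A `<=` B)%fset ->
  (#|` (f @` B)%fset| <= #|` (f @` A)%fset| + (#|` B| - #|` A|))%N.
Proof.
move=> AB.
have splitB : B = (A `|` (B `\` A))%fset.
  by rewrite -{1}(fsetID A B) (fsetIidPr AB).
have -> : (f @` B)%fset = (f @` A `|` f @` (B `\` A))%fset.
  by rewrite -imfsetU -splitB.
rewrite cardfsU; apply: (leq_trans (leq_subr _ _)).
by rewrite leq_add2l -cardfsDS //; exact: leq_imfset_card.
Qed.

(* The map collapsing A to a single point [None] and injective off A. *)
Definition collapse (T : choiceType) (A B : {fset T}) (x : T)
  : option (B `\` A)%fset := insub x.

Lemma card_collapse (T : choiceType) (A B : {fset T}) :
  A != fset0 -> (A `<=` B)%fset ->
  [/\ (collapse A B @` A)%fset = [fset None]%fset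
    & #|` (collapse A B @` B)%fset| = (#|` B| - #|` A|).+1]%N.
Proof.
move=> /fset0Pn [a aA] AB.
have collapseA x : x \in A -> collapse A B x = None.
  by move=> xA; rewrite /collapse insubF // in_fsetD xA.
have collapseD x (xD : x \in (B `\` A)%fset) : collapse A B x = Some (Sub x xD).
  by rewrite /collapse insubT.
have imA : (collapse A B @` A)%fset = [fset None]%fset.
  apply/fsetP => z; rewrite inE; apply/imfsetP/eqP.
    by move=> [x xA ->]; rewrite collapseA.
  by move=> ->; exists a => //; rewrite collapseA.
split=> //.
have -> : (collapse A B @` B)%fset = (None |` collapse A B @` (B `\` A))%fset.
  rewrite -imA -imfsetU; apply: eq_imfset => // x.
  by rewrite !inE; case: (boolP (x \in A)) => //= xA; rewrite (fsubsetP AB).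
have noneD : None \notin (collapse A B @` (B `\` A))%fset.
  by apply/imfsetP => -[x xD]; rewrite (collapseD x xD).
rewrite cardfsU1 noneD add1n.
rewrite -cardfsDS //; congr (_.+1)%N.
apply/eqP/card_in_imfsetP => x y xD yD.
by rewrite (collapseD x xD) (collapseD y yD) => -[].
Qed.

Lemma inf_attained (R : realType) (E : set R) (x : R) :
  E x -> lbound E x -> inf E = x.
Proof.
move=> Ex xlb; apply/eqP; rewrite eq_le lb_le_inf ?andbT //; last by exists x.
by apply: ge_inf => //; exists x.
Qed.

Lemma sup_attained (R : realType) (E : set R) (x : R) :
  E x -> ubound E x -> sup E = x.
Proof.
move=> Ex xub; apply/eqP; rewrite eq_le ge_sup //=; last by exists x.
by apply: sup_upper_bound => //; split; exists x.
Qed.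

Lemma inf_nat_attained (R : realType) (I : Type) (E : set I) (F : I -> nat) :
  E !=set0 ->
  exists2 i0, E i0 & (inf [set (F i)%:R | i in E] = (F i0)%:R :> R) /\
    (forall i, E i -> F i0 <= F i)%N.
Proof.
move=> [z Ez].
have exF : exists n, `[< exists i, E i /\ F i = n >] by exists (F z); apply/asboolP; exists z.
case: (ex_minnP exF) => n /asboolP [i0 [Ei0 <-]] minF.
have leF i : E i -> (F i0 <= F i)%N by move=> Ei; apply: minF; apply/asboolP; exists i.
exists i0 => //; split=> //.
by apply: inf_attained; [exists i0 | move=> _ [i Ei <-]; rewrite ler_nat leF].
Qed.

Lemma log2_le (R : realType) (a b : R) : 0 < a -> a <= b -> log2 a <= log2 b.
Proof.
move=> a0 ab; have b0 : 0 < b by apply: lt_le_trans ab.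
rewrite /log2 ler_pM2r; last by rewrite invr_gt0 ln_gt0 // ltr1n.
by rewrite ler_ln // posrE.
Qed.

Lemma ratio_le_excess (R : realFieldType) (k c d : R) :
  1 <= c -> 0 <= d -> k <= c + d -> k / c <= d + 1.
Proof.
move=> c1 d0 kcd; have c0 : 0 < c by apply: lt_le_trans c1.
rewrite ler_pdivrMr //; apply: (le_trans kcd); nra.
Qed.

Lemma ncard_le (T : choiceType) (A B : set T) :
  finite_set B -> A `<=` B -> (ncard A <= ncard B)%N.
Proof.
move=> finB AB; have finA := sub_finite_set AB finB.
by apply: fsubset_leq_card; rewrite -fset_set_sub.
Qed.

Lemma ncard_gt0 (T : choiceType) (A : set T) :
  finite_set A -> A !=set0 -> (0 < ncard A)%N.
Proof.
move=> finA [x Ax]; rewrite /ncard cardfs_gt0; apply/negP => /eqP.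
by move/(fset_set_set0 finA) => A0; rewrite A0 in Ax.
Qed.

Lemma urange_comp (Omega : Type) (T U : choiceType) (g : T -> U)
  (X : Omega -> T) : urange (g \o X) = g @` urange X.
Proof. by rewrite /urange image_comp. Qed.

Lemma ucrange_comp (Omega : Type) (T S U : choiceType) (g : T -> U)
  (X : Omega -> T) (Y : Omega -> S) (y : S) :
  ucrange (g \o X) Y y = g @` ucrange X Y y.
Proof. by rewrite /ucrange image_comp. Qed.

Lemma ucrange_sub (Omega : Type) (T S : choiceType)
  (X : Omega -> T) (Y : Omega -> S) (y : S) : ucrange X Y y `<=` urange X.
Proof. by move=> _ [w _ <-]; exists w. Qed.
Arguments ucrange_sub {Omega T S} X Y y.

Lemma finite_ucrange (Omega : Type) (T S : choiceType)
  (X : Omega -> T) (Y : Omega -> S) (y : S) :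
  finite_set (urange X) -> finite_set (ucrange X Y y).
Proof. exact/sub_finite_set/ucrange_sub. Qed.

Lemma ucrange_neq0 (Omega : Type) (T S : choiceType)
  (X : Omega -> T) (Y : Omega -> S) (y : S) :
  urange Y y -> ucrange X Y y !=set0.
Proof. by move=> [w _ <-]; exists (X w), w. Qed.

Section Leakage.
Variables (R : realType) (Omega : Type) (w0 : Omega) (T S : choiceType).
Variables (X : Omega -> T) (Y : Omega -> S).
Hypothesis finX : finite_set (urange X).

(* Omega is inhabited, so [[Y]] is nonempty and minima over it exist. *)
Let neY : urange Y !=set0. Proof. by exists (Y w0), w0. Qed.

Let finA (y : S) : finite_set (ucrange X Y y). Proof. exact: finite_ucrange. Qed.

Lemma min_crange_spec (V : choiceType) (U : Omega -> V) :
  finite_set (urange U) ->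
  exists2 y0, urange Y y0 &
    [/\ min_crange R U Y = (ncard (ucrange U Y y0))%:R,
        (0 < ncard (ucrange U Y y0))%N
      & forall y, urange Y y ->
          (ncard (ucrange U Y y0) <= ncard (ucrange U Y y))%N].
Proof.
move=> finU.
have [y0 Yy0 [minE minF]] := inf_nat_attained R (fun y => ncard (ucrange U Y y)) neY.
exists y0 => //; split=> //.
apply: ncard_gt0; last exact: ucrange_neq0.
exact: finite_ucrange.
Qed.

Let finGX (U : choiceType) (g : T -> U) : finite_set (urange (g \o X)).
Proof. by rewrite urange_comp; apply: finite_image. Qed.

Lemma ncard_urange_comp_le (U : choiceType) (g : T -> U) (y : S) :
  (ncard (urange (g \o X)) <=
   ncard (ucrange (g \o X) Y y) + (ncard (urange X) - ncard (ucrange X Y y)))%N.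
Proof.
have sub : (fset_set (ucrange X Y y) `<=` fset_set (urange X))%fset.
  by rewrite -fset_set_sub //; exact: ucrange_sub.
have := card_imfset_extend g sub.
by rewrite -!fset_set_image // -urange_comp -ucrange_comp.
Qed.

Lemma bf_leakage_comp_le (U : finType) (g : T -> U) :
  bf_leakage R (g \o X) Y <=
  log2 ((ncard (urange X))%:R - min_crange R X Y + 1).
Proof.
rewrite /bf_leakage.
have [y0 Yy0 [-> _ minX]] := min_crange_spec finX.
have [y1 Yy1 [-> c_gt0 _]] := min_crange_spec (finGX g).
set n := ncard (urange X); set m := ncard (ucrange X Y y0).
set c := ncard (ucrange (g \o X) Y y1); set k := ncard (urange (g \o X)).
have mn : (m <= n)%N by apply: ncard_le => //; exact: ucrange_sub.
have kc : (k <= c + (n - m))%N.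
  apply: (leq_trans (ncard_urange_comp_le g y1)).
  by rewrite leq_add2l leq_sub2l // minX.
have k_gt0 : (0 < k)%N by apply: ncard_gt0 => //; exists (g (X w0)), w0.
apply: log2_le; first by rewrite divr_gt0 ?ltr0n.
apply: ratio_le_excess; first by rewrite ler1n.
  by rewrite subr_ge0 ler_nat.
by rewrite -natrB // -natrD ler_nat.
Qed.

Lemma bf_leakage_collapse : exists (U : finType) (g : T -> U),
  bf_leakage R (g \o X) Y = log2 ((ncard (urange X))%:R - min_crange R X Y + 1).
Proof.
have [y0 Yy0 [-> m_gt0 _]] := min_crange_spec finX.
pose A := fset_set (ucrange X Y y0); pose B := fset_set (urange X).
have AB : (A `<=` B)%fset by rewrite -fset_set_sub //; exact: ucrange_sub.
have A_neq0 : A != fset0 by rewrite -cardfs_gt0.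
have [imA cardB] := card_collapse A_neq0 AB.
pose g := collapse A B.
exists (option (B `\` A)%fset), g.
have rangeE : ncard (urange (g \o X)) = (ncard (urange X) - ncard (ucrange X Y y0)).+1.
  by rewrite /ncard urange_comp fset_set_image.
rewrite /bf_leakage.
have [y1 Yy1 [-> c_gt0 minG]] := min_crange_spec (finGX g).
have condE : ncard (ucrange (g \o X) Y y0) = 1%N.
  by rewrite /ncard ucrange_comp fset_set_image // imA cardfs1.
have -> : ncard (ucrange (g \o X) Y y1) = 1%N.
  by apply/eqP; rewrite eqn_leq c_gt0 -condE minG.
have mn : (ncard (ucrange X Y y0) <= ncard (urange X))%N.
  by apply: ncard_le => //; exact: ucrange_sub.
by rewrite divr1 rangeE -addn1 natrD natrB.
Qed.

End Leakage.

Theorem proposition4 (R : realType) (Omega : Type) (w0 : Omega)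
  (T S : choiceType) (X : Omega -> T) (Y : Omega -> S)
  (finX : finite_set (urange X)) (finY : finite_set (urange Y)) :
  max_bf_leakage R X Y =
    log2 ((ncard (urange X))%:R - min_crange R X Y + 1).
Proof.
have [U [g attained]] := bf_leakage_collapse R w0 Y finX.
apply: sup_attained; first by exists U, g.
by move=> _ [V [f ->]]; exact: bf_leakage_comp_le.
Qed.
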